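(* Let $(X,+,d)$ be a complete, locally compact Abelian metric group with translation-invariant metric $d$ such that every non-empty open ball in $X$ contains infinitely many elements. Let $A\in K(X)$. Then the spectre operator $S:K(X)\to K(X)$ is continuous at $A$ (with respect to the Pompeiu–Hausdorff metric) if and only if $S(A)=\{0\}$.
   Context: $d$ satisfies $d(x,y)=d(x+z,y+z)$ for all $x,y,z\in X$; $0$ is the neutral element. $K(X)$ is the family of non-empty compact subsets of $X$ with the Pompeiu–Hausdorff metric $d_H(A,B)=\max\{\sup_{a\in A}d(a,B),\sup_{b\in B}d(A,b)\}$. The spectre of $A\subset X$ is $S(A):=\{z\in X:\ \forall_{a\in A}\ (a+z\in A \text{ or } a-z\in A)\}$; it is compact for compact non-empty $A$. *)

From HB Require Import structures.
From mathcomp Require Import all_boot all_order all_algebra.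
From mathcomp Require Import all_classical all_reals.
Set Implicit Arguments. Unset Strict Implicit. Unset Printing Implicit Defensive.
Import Order.TTheory GRing.Theory Num.Theory.
Local Open Scope classical_set_scope.
Local Open Scope ring_scope.

Section MetricGroup.
Variables (R : realType) (X : zmodType) (d : X -> X -> R).

Definition is_metric : Prop :=
  [/\ forall x y, 0 <= d x y,
      forall x y, d x y = 0 <-> x = y,
      forall x y, d x y = d y x &
      forall x y z, d x z <= d x y + d y z].

Definition translation_invariant : Prop :=
  forall x y z, d x y = d (x + z) (y + z).

Definition oball (x : X) (r : R) : set X := [set y | d x y < r].

Definition d_open (U : set X) : Prop :=
  forall x, U x -> exists2 r : R, 0 < r & oball x r `<=` U.

Definition d_compact (K : set X) : Prop :=
  forall (I : Type) (U : I -> set X),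
    (forall i, d_open (U i)) -> K `<=` \bigcup_i U i ->
    exists (n : nat) (f : nat -> I), K `<=` \bigcup_(k in [set k | (k < n)%N]) U (f k).

Definition d_cauchy (u : nat -> X) : Prop :=
  forall e : R, 0 < e -> exists N, forall m n, (N <= m)%N -> (N <= n)%N -> d (u m) (u n) < e.

Definition d_converges (u : nat -> X) (l : X) : Prop :=
  forall e : R, 0 < e -> exists N, forall n, (N <= n)%N -> d (u n) l < e.

Definition d_complete : Prop :=
  forall u, d_cauchy u -> exists l, d_converges u l.

Definition d_locally_compact : Prop :=
  forall x, exists K, d_compact K /\ exists2 r : R, 0 < r & oball x r `<=` K.

Definition balls_infinite : Prop :=
  forall x (r : R), oball x r !=set0 -> ~ finite_set (oball x r).

Definition KX (A : set X) : Prop := A !=set0 /\ d_compact A.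

Definition dist_pt_set (a : X) (B : set X) : R := inf [set d a b | b in B].

Definition dH (A B : set X) : R :=
  Num.max (sup [set dist_pt_set a B | a in A])
          (sup [set dist_pt_set b A | b in B]).

Definition spectre (A : set X) : set X :=
  [set z | forall a, A a -> A (a + z) \/ A (a - z)].

Definition spectre_continuous_at (A : set X) : Prop :=
  forall e : R, 0 < e -> exists2 delta : R, 0 < delta &
    forall B, KX B -> dH A B < delta -> dH (spectre A) (spectre B) < e.

End MetricGroup.

From HB Require Import structures.
From mathcomp Require Import all_boot all_order all_algebra.
From mathcomp Require Import all_classical all_reals.
From mathcomp Require Import lra.
Set Implicit Arguments. Unset Strict Implicit. Unset Printing Implicit Defensive.
Import Order.TTheory GRing.Theory Num.Theory.
Local Open Scope classical_set_scope.
Local Open Scope ring_scope.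

(* If S(A) = {0}, every z away from 0 has a witness a in A with a + z and
   a - z outside A, hence at some distance r > 0 from A by compactness; this
   exclusion survives any perturbation of A and z that is small compared to r.
   Covering A by finitely many balls around points y, and treating the
   candidates y - a0, gives a uniform delta such that S(B) lies near 0 whenever
   dH(A, B) < delta.  Conversely, since balls are infinite, A is approximated
   by finite sets F = N ∪ {q1, q2, q3, p} (N a net of A) in which p avoids all
   x + y - w; such F have S(F) = {0}, so continuity at A forces S(A) = {0}. *)

Lemma infinite_set_avoid (T : eqType) (S : set T) (s : seq T) :
  ~ finite_set S -> exists2 x, S x & x \notin s.
Proof.
move=> infS; apply: contrapT => noS; apply: infS.
apply: sub_finite_set (finite_seq s) => x Sx /=.
by apply: contrapT => /negP xs; apply: noS; exists x.
Qed.

Lemma finite_min_pos (R : realType) (g : nat -> R) n : (forall k, 0 < g k) ->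
  exists2 e, 0 < e & forall k, (k < n)%N -> e <= g k.
Proof.
move=> g0; elim: n => [|n [e e0 le_e]]; first by exists 1.
exists (Num.min e (g n)) => [|k]; first by rewrite lt_min e0 g0.
rewrite ltnS leq_eqVlt => /orP[/eqP->|kn]; first by rewrite ge_min lexx orbT.
by rewrite ge_min le_e.
Qed.

Section Spectre.
Variable X : zmodType.
Implicit Types (A : set X) (z : X).

Lemma spectre0 A : spectre A 0.
Proof. by move=> a Aa; left; rewrite addr0. Qed.

Lemma spectreN A z : spectre A z -> spectre A (- z).
Proof. by move=> Sz a /Sz [] ?; [right|left]; rewrite ?opprK. Qed.

(* A nonzero z in S(F) moves p into G (up to sign), and then general position
   forces w + z = p for all but one w in G. *)
Lemma spectre_general_position (G : seq X) (p q1 q2 q3 : X) :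
  q1 \in G -> q2 \in G -> q3 \in G -> uniq [:: q1; q2; q3] ->
  (forall x y w, x \in G -> y \in G -> w \in G -> p != x + y - w) ->
  spectre [set x | x \in p :: G] = [set 0].
Proof.
move=> q1G q2G q3G /and3P[]; rewrite !inE negb_or => /andP[n12 n13] n23 _ pG.
have no_shift z : spectre [set x | x \in p :: G] z -> p + z \notin G.
  move=> Sz; apply/negP => hG.
  have shift_p w : w \in G -> w != p + z -> w + z = p.
    move=> wG wh; have [||] := Sz w; rewrite /= ?in_cons ?wG ?orbT //.
    - case/orP=> [/eqP //|g]; move: (pG _ _ _ wG hG g).
      by rewrite addrCA addrK eqxx.
    - case/orP=> [/eqP wzp|g]; first by move: wh; rewrite -wzp subrK eqxx.
      move: (pG _ _ _ g hG wG).
      by rewrite addrACA addNr addr0 addrAC subrr add0r eqxx.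
  have [u [v [uG vG uh vh uv]]] : exists u v,
      [/\ u \in G, v \in G, u != p + z, v != p + z & u != v].
    have [e1|e1] := eqVneq q1 (p + z).
      by exists q2, q3; rewrite -e1 eq_sym n12 eq_sym n13.
    have [e2|e2] := eqVneq q2 (p + z).
      by exists q1, q3; rewrite -e2 n12 eq_sym n23.
    by exists q1, q2.
  by move: uv; rewrite (addIr z (etrans (shift_p u uG uh) (esym (shift_p v vG vh)))) eqxx.
apply/seteqP; split=> z /=; last by move=> ->; apply: spectre0.
move=> Sz; have [||] := Sz p; rewrite /= ?mem_head // in_cons => /orP[/eqP|hG].
- by rewrite -{2}[p]addr0 => /addrI.
- by have := no_shift _ Sz; rewrite hG.
- by rewrite -{2}[p]addr0 => /addrI /eqP; rewrite oppr_eq0 => /eqP.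
- by have := no_shift _ (spectreN Sz); rewrite hG.
Qed.

End Spectre.

Section InvariantMetric.
Variables (R : realType) (X : zmodType) (d : X -> X -> R).
Hypotheses (hmet : is_metric d) (hinv : translation_invariant d).
Implicit Types (A B K : set X) (x y z : X).

Lemma d_ge0 x y : 0 <= d x y. Proof. by case: hmet. Qed.
Lemma d_xx x : d x x = 0.
Proof. by case: hmet => _ h _ _; exact: (proj2 (h x x)). Qed.
Lemma d_eq0 x y : d x y = 0 -> x = y.
Proof. by case: hmet => _ h _ _; exact: (proj1 (h x y)). Qed.
Lemma d_sym x y : d x y = d y x. Proof. by case: hmet. Qed.
Lemma d_triangle x y z : d x z <= d x y + d y z. Proof. by case: hmet. Qed.

Lemma d_gt0 x y : x != y -> 0 < d x y.
Proof. by move=> xy; rewrite lt_def d_ge0 andbT; apply: contra xy => /eqP/d_eq0->. Qed.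

Lemma d_addr x y z : d (x + z) (y + z) = d x y. Proof. by rewrite -hinv. Qed.
Lemma d_addl x y z : d (z + x) (z + y) = d x y.
Proof. by rewrite ![z + _]addrC d_addr. Qed.

Lemma d_opp x y : d (- x) (- y) = d x y.
Proof. by rewrite (hinv _ _ (x + y)) addKr [x + y]addrC addKr d_sym. Qed.

Lemma d_add_le x y z z' : d (x + z) (y + z') <= d x y + d z z'.
Proof. by apply: le_trans (d_triangle _ (y + z) _) _; rewrite d_addr d_addl. Qed.

Lemma oball_open x r : d_open d (oball d x r).
Proof.
move=> y; rewrite /oball /= => xy; exists (r - d x y); first by rewrite subr_gt0.
by move=> w; rewrite /oball /= => yw; apply: le_lt_trans (d_triangle x y w) _; lra.
Qed.

Definition d_bounded A := forall x0, exists M : R, forall y, A y -> d x0 y < M.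

Definition close_sets (r : R) A B :=
  (forall a, A a -> exists2 b, B b & d a b < r) /\
  (forall b, B b -> exists2 a, A a & d b a < r).

Lemma dist_pt_set_le a B b : B b -> dist_pt_set d a B <= d a b.
Proof.
move=> Bb; apply: ge_inf; last by exists b.
by exists 0 => _ [c _ <-]; apply: d_ge0.
Qed.

Lemma dist_pt_set_lt a B r :
  B !=set0 -> dist_pt_set d a B < r -> exists2 b, B b & d a b < r.
Proof.
move=> [b Bb] /inf_lt [|_ [c Bc <-] ac]; first by exists (d a b), b.
by exists c.
Qed.

Lemma dist_pt_set_ub A B :
  d_bounded A -> B !=set0 -> has_ubound [set dist_pt_set d a B | a in A].
Proof.
move=> bA [b Bb]; have [M hM] := bA b.
exists M => _ [a Aa <-]; apply: le_trans (dist_pt_set_le a Bb) _.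
by rewrite d_sym ltW ?hM.
Qed.

Lemma dH_sym A B : dH d A B = dH d B A.
Proof. by rewrite /dH maxC. Qed.

Lemma dist_pt_set_le_dH A B a :
  d_bounded A -> B !=set0 -> A a -> dist_pt_set d a B <= dH d A B.
Proof.
move=> bA B0 Aa; rewrite /dH le_max; apply/orP; left.
by apply: ub_le_sup; [exact: dist_pt_set_ub | exists a].
Qed.

Lemma dH_lt_close_sets r A B : A !=set0 -> B !=set0 ->
  d_bounded A -> d_bounded B -> dH d A B < r -> close_sets r A B.
Proof.
move=> A0 B0 bA bB AB; split=> [a Aa|b Bb]; apply: dist_pt_set_lt => //.
  exact: le_lt_trans (dist_pt_set_le_dH bA B0 Aa) AB.
by rewrite dH_sym in AB; exact: le_lt_trans (dist_pt_set_le_dH bB A0 Bb) AB.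
Qed.

Lemma close_sets_dH_le r A B : A !=set0 -> B !=set0 ->
  close_sets r A B -> dH d A B <= r.
Proof.
have half C D : C !=set0 -> (forall c, C c -> exists2 e, D e & d c e < r) ->
    sup [set dist_pt_set d c D | c in C] <= r.
  move=> [c Cc] CD; apply: ge_sup; first by exists (dist_pt_set d c D), c.
  move=> _ [c' /CD [e De ce] <-].
  exact/ltW/(le_lt_trans (dist_pt_set_le c' De)).
by move=> A0 B0 [AB BA]; rewrite /dH ge_max !half.
Qed.

Lemma compact_increasing_cover K (U : nat -> set X) : d_compact d K ->
  (forall n, d_open d (U n)) -> {homo U : m n / (m <= n)%N >-> m `<=` n} ->
  K `<=` \bigcup_n U n -> exists N, K `<=` U N.
Proof.
move=> cK oU incU KU; have [n [f Kf]] := cK _ _ oU KU.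
exists (\sum_(k < n) f k)%N => x /Kf [k /= kn Ux]; apply: incU Ux.
by rewrite (bigD1 (Ordinal kn)) //= leq_addr.
Qed.

Lemma compact_bounded K : d_compact d K -> d_bounded K.
Proof.
move=> cK x0.
have [|||N KN] := compact_increasing_cover (U := fun n => oball d x0 n%:R) cK.
- by move=> n; apply: oball_open.
- by move=> m n mn y /= x0y; apply: lt_le_trans x0y _; rewrite ler_nat.
- by move=> y _; exists (Num.truncn (d x0 y)).+1 => //=; rewrite /oball /= truncnS_gt.
by exists N%:R.
Qed.

Lemma compact_notin_far K x : d_compact d K -> ~ K x ->
  exists2 r : R, 0 < r & forall y, K y -> r <= d x y.
Proof.
move=> cK Kx.
have [|||N KN] :=
  compact_increasing_cover (U := fun n => [set y | n.+1%:R^-1 < d x y]) cK.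
- move=> n y /= hy; exists (d x y - n.+1%:R^-1); first by rewrite subr_gt0.
  move=> w; rewrite /oball /= => yw; have := d_triangle x w y; rewrite (d_sym w y).
  by set c := n.+1%:R^-1 in hy yw *; lra.
- move=> m n mn y /=; apply: le_lt_trans.
  by rewrite lef_pV2 ?posrE // ler_nat.
- move=> y Ky; have xy : 0 < d x y by apply: d_gt0; apply: contra_notN Kx => /eqP->.
  by exists (Num.truncn (d x y)^-1) => //=; rewrite invf_plt ?posrE // truncnS_gt.
by exists N.+1%:R^-1 => [|y /KN /ltW]; rewrite ?invr_gt0.
Qed.

Lemma compact_finite_net K r : d_compact d K -> 0 < r -> exists s : seq X,
  (forall x, x \in s -> K x) /\ forall y, K y -> exists2 x, x \in s & d x y < r.
Proof.
move=> cK r0.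
have [|n [f Kf]] :=
  cK {x | K x} (fun i => oball d (sval i) r) (fun i => @oball_open (sval i) r).
  by move=> y Ky; exists (exist _ y Ky) => //=; rewrite /oball /= d_xx.
exists [seq sval (f k) | k <- iota 0 n]; split.
  by move=> _ /mapP[k _ ->]; exact: (svalP (f k)).
move=> y /Kf[k /= kn fky]; exists (sval (f k)) => //.
by apply/mapP; exists k; rewrite // mem_iota.
Qed.

Lemma seq_compact (s : seq X) : s != [::] -> d_compact d [set x | x \in s].
Proof.
case: s => [//|x0 s] _ I U _ sU; set s0 := x0 :: s.
have [i0 _ _] := sU x0 (mem_head _ _).
have [g sg] : exists g : X -> I, forall x, x \in s0 -> U (g x) x.
  have [|g sg] := @choice _ _ (fun x i => x \in s0 -> U i x); last by exists g.
  by move=> x; case: (boolP (x \in s0)) => [/sU[i _ Ui]|xs]; [exists i | exists i0].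
exists (size s0), (fun k => g (nth x0 s0 k)) => x /= xs.
exists (index x s0); first by move: xs; rewrite -index_mem.
by rewrite nth_index //; exact: sg.
Qed.

End InvariantMetric.

Section Discontinuity.
Variables (R : realType) (X : zmodType) (d : X -> X -> R).
Hypotheses (hmet : is_metric d) (hinv : translation_invariant d).
Hypothesis hinf : balls_infinite d.

Lemma general_position_approx A r : KX d A -> 0 < r ->
  exists F, [/\ KX d F, close_sets d r A F & spectre F = [set 0]].
Proof.
move=> [[a0 Aa0] cA] r0; have [s [sA snet]] := compact_finite_net hmet cA r0.
have ball_inf : ~ finite_set (oball d a0 r).
  by apply: hinf; exists a0; rewrite /oball /= d_xx.
have [q1 q1r _] := infinite_set_avoid [::] ball_inf.
have [q2 q2r q21] := infinite_set_avoid [:: q1] ball_inf.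
have [q3 q3r q321] := infinite_set_avoid [:: q2; q1] ball_inf.
set G := [:: q1, q2, q3 & s].
have [p pr pbad] := infinite_set_avoid
  [seq u - w | u <- [seq x + y | x <- G, y <- G], w <- G] ball_inf.
exists [set x | x \in p :: G]; split.
- by split; [exists p; rewrite /= mem_head | exact: seq_compact].
- split=> [a /snet[x xs xa] | f].
    by exists x; rewrite /= ?inE ?xs ?orbT // (d_sym hmet).
  rewrite /= !inE; have [fs _|sf] := boolP (f \in s).
    by exists f; [exact: sA | rewrite (d_xx hmet)].
  rewrite orbF => fpG; exists a0; rewrite // (d_sym hmet).
  by case/or4P: fpG => /eqP->.
- apply: (@spectre_general_position _ G p q3 q2 q1); rewrite ?inE ?eqxx ?orbT //=.
    by rewrite q21 q321.
  move=> x y w xG yG wG; apply: contraNneq pbad => ->.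
  by apply: (allpairs_f (fun u v => u - v)) => //; apply: (allpairs_f (fun u v => u + v)).
Qed.

Lemma spectre_bounded A : A !=set0 -> d_bounded d A -> d_bounded d (spectre A).
Proof.
move=> [a0 Aa0] bA x0; have [M AM] := bA a0.
exists (d x0 0 + M) => z Sz; apply: le_lt_trans (d_triangle hmet x0 0 z) _.
rewrite ltrD2l; have [Az|Az] := Sz a0 Aa0.
  by rewrite -(d_addl hinv 0 z a0) addr0 AM.
by rewrite -(d_opp hmet hinv) oppr0 -(d_addl hinv 0 _ a0) addr0 AM.
Qed.

Lemma spectre_continuous_at_trivial A : KX d A ->
  spectre_continuous_at d A -> spectre A = [set 0].
Proof.
move=> KA contA; apply/seteqP; split=> [z Sz | _ ->]; last exact: spectre0.
have [//|z_neq0] := eqVneq z 0; exfalso.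
have [r r0 contr] := contA _ (d_gt0 hmet z_neq0).
have [F [KF AF SF]] := general_position_approx KA (divr_gt0 r0 (ltr0Sn _ 1)).
have AFr : dH d A F < r.
  apply: le_lt_trans (close_sets_dH_le hmet KA.1 KF.1 AF) _.
  by rewrite ltr_pdivrMr // ltr_pMr // ltr1n.
have bounded0 : d_bounded d [set 0].
  by move=> x0; exists (d x0 0 + 1) => _ ->; rewrite ltrDl.
have := contr F KF AFr; rewrite SF => SA0.
have [/(_ z Sz)[b b0 zb] _] :=
  dH_lt_close_sets hmet (ex_intro _ z Sz) (ex_intro _ 0 erefl)
    (spectre_bounded KA.1 (compact_bounded hmet KA.2)) bounded0 SA0.
by move: zb; rewrite b0 ltxx.
Qed.

End Discontinuity.

Section Continuity.
Variables (R : realType) (X : zmodType) (d : X -> X -> R).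
Hypotheses (hmet : is_metric d) (hinv : translation_invariant d).
Variable A : set X.
Hypothesis cA : d_compact d A.

(* Either z is small, or z lies outside S(A) with margin r; rho is the
   perturbation of z that this tolerates. *)
Definition spectre_gap (eps : R) (z : X) (rho : R) :=
  (d z 0 < eps /\ rho <= eps) \/
  exists a r, [/\ A a, 0 < r, rho <= r / 2 &
    forall x, A x -> r <= d (a + z) x /\ r <= d (a - z) x].

Lemma spectre_gap_exists eps z : 0 < eps -> spectre A = [set 0] ->
  exists2 rho, 0 < rho & spectre_gap eps z rho.
Proof.
move=> eps0 SA; have [z_small|z_large] := ltP (d z 0) eps.
  by exists eps => //; left.
have : ~ spectre A z.
  by rewrite SA => /= z0; move: z_large; rewrite z0 (d_xx hmet) leNgt eps0.
move=> /existsNP[a /not_implyP[Aa /not_orP[Aaz Aaz']]].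
have [r1 r10 far1] := compact_notin_far hmet cA Aaz.
have [r2 r20 far2] := compact_notin_far hmet cA Aaz'.
have r0 : 0 < Num.min r1 r2 by rewrite lt_min r10 r20.
exists (Num.min r1 r2 / 2); first by rewrite divr_gt0.
right; exists a, (Num.min r1 r2); split=> // x Ax.
by rewrite !ge_min far1 ?far2 ?orbT.
Qed.

Lemma spectre_gap_cover eps a0 : 0 < eps -> spectre A = [set 0] ->
  exists2 delta, 0 < delta & forall w, A w -> exists y rho,
    [/\ d w y < rho / 2, delta <= rho / 4 & spectre_gap eps (y - a0) rho].
Proof.
move=> eps0 SA.
pose I := {yr : X * R | [/\ A yr.1, 0 < yr.2 & spectre_gap eps (yr.1 - a0) yr.2]}.
have [|n [f Af]] := @cA I (fun i => oball d (sval i).1 ((sval i).2 / 2))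
    (fun i => @oball_open _ _ _ hmet (sval i).1 _).
  move=> y Ay; have [rho rho0 gap] := spectre_gap_exists (y - a0) eps0 SA.
  exists (exist _ (y, rho) (And3 Ay rho0 gap)) => //=.
  by rewrite /oball /= (d_xx hmet) divr_gt0.
have [delta delta0 le_delta] := @finite_min_pos _ (fun k => (sval (f k)).2 / 4) n
  (fun k => let: And3 _ rho0 _ := svalP (f k) in divr_gt0 rho0 (ltr0Sn _ 3)).
exists delta => // w /Af[k /= kn]; move: (le_delta k kn).
case: (f k) => [[y rho] [/= _ _ gap]] /= delta_rho yw.
by exists y, rho; split; rewrite // (d_sym hmet).
Qed.

Lemma spectre_gap_small eps z' rho delta B z : spectre_gap eps z' rho ->
  delta <= rho / 4 -> close_sets d delta A B -> spectre B z -> d z z' < rho ->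
  d z 0 < eps + eps.
Proof.
move=> [[z'0 rho_eps]|[a [r [Aa r0 rho_r far]]]] delta_rho [AB BA] Sz zz'.
  by have := d_triangle hmet z z' 0; lra.
have [b Bb ab] := AB a Aa.
have translate u u' : d u u' < rho -> B (b + u) ->
    ~ (forall x, A x -> r <= d (a + u') x).
  move=> uu' Bbu farA; have [x Ax bux] := BA _ Bbu.
  have := farA x Ax; have := d_triangle hmet (a + u') (b + u) x.
  have := d_add_le hmet hinv a b u' u; rewrite (d_sym hmet u' u); lra.
exfalso; have [Bbz|Bbz] := Sz b Bb.
  by apply: (translate z z') => // x /far[].
by apply: (translate (- z) (- z')); rewrite ?(d_opp hmet hinv) // => x /far[].
Qed.

Lemma trivial_spectre_continuous_at : A !=set0 -> spectre A = [set 0] ->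
  spectre_continuous_at d A.
Proof.
move=> [a0 Aa0] SA e e0.
have [delta delta0 cover] := spectre_gap_cover a0 (divr_gt0 e0 (ltr0Sn _ 3)) SA.
exists delta => // B [B0 cB] AB.
have [AB' BA'] := dH_lt_close_sets hmet (ex_intro _ a0 Aa0) B0
  (compact_bounded hmet cA) (compact_bounded hmet cB) AB.
have [b1 Bb1 ab1] := AB' a0 Aa0.
have small z : spectre B z -> B (b1 + z) -> d z 0 < e / 4 + e / 4.
  move=> Sz Bz; have [w Aw bzw] := BA' _ Bz.
  have [y [rho [wy delta_rho gap]]] := cover w Aw.
  have zy : d z (y - a0) < rho.
    rewrite -(d_addr hinv _ _ a0) subrK.
    have : d (z + a0) (b1 + z) = d a0 b1 by rewrite addrC (d_addr hinv).
    have := d_triangle hmet (z + a0) (b1 + z) w; have := d_triangle hmet (z + a0) w y.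
    lra.
  exact: spectre_gap_small gap delta_rho (conj AB' BA') Sz zy.
rewrite SA; apply: le_lt_trans (close_sets_dH_le hmet (r := e / 2) _ _ _) _.
- by exists 0.
- by exists 0; exact: spectre0.
- split=> [_ -> | z Sz].
    by exists 0; [exact: spectre0 | rewrite (d_xx hmet) divr_gt0].
  exists 0 => //; have [Bz|Bz] := Sz b1 Bb1; first by have := small z Sz Bz; lra.
  by have := small _ (spectreN Sz) Bz; rewrite -[X in d _ X]oppr0 (d_opp hmet hinv); lra.
- lra.
Qed.

End Continuity.

Theorem theorem3p10 (R : realType) (X : zmodType) (d : X -> X -> R)
  (hmet : is_metric d) (hinv : translation_invariant d)
  (hcompl : d_complete d) (hlc : d_locally_compact d)
  (hinf : balls_infinite d)
  (A : set X) (hA : KX d A) :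
  spectre_continuous_at d A <-> spectre A = [set 0].
Proof.
split; first exact: (spectre_continuous_at_trivial hmet hinv hinf hA).
by case: hA => A0 cA; exact: (trivial_spectre_continuous_at hmet hinv cA A0).
Qed.
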